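(* The Lie algebras $\mathfrak h(1)$, $\mathfrak g_{4,1}$, $\mathfrak g_{5,2}$, $\mathfrak g_{6,4}$, $\mathfrak g_{6,5}$ are admissible.
   Context: Lie algebras are given by a basis and brackets; brackets of basis vectors not listed vanish. $\mathfrak h(1)=\{[X_1,X_2]=Y\}$, $\mathfrak g_{4,1}=\{[X_1,Z]=Y,[X_1,X_2]=Z\}$, $\mathfrak g_{5,2}=\{[X_1,X_2]=Y,[X_1,X_3]=Z\}$, $\mathfrak g_{6,4}=\{[X_1,X_2]=Y,[X_1,X_3]=Z,[X_3,X_4]=Y\}$, $\mathfrak g_{6,5}=\{[X_1,X_2]=Y,[X_1,X_3]=Z,[X_2,X_4]=Z,[X_3,X_4]=-Y\}$ (real Lie algebras). For a Lie algebra $\mathfrak l$: $\mathfrak l^1=\mathfrak l$, $\mathfrak l^{k+1}=[\mathfrak l,\mathfrak l^k]$, $\mathfrak z(\mathfrak l)$ the centre. An orthogonal $\mathfrak l$-module $(\rho,\mathfrak a)$ is a finite-dimensional real vector space with a nondegenerate symmetric bilinear form $\langle\cdot,\cdot\rangle_{\mathfrak a}$ and a representation by skew-adjoint maps. $C^p(\mathfrak l,\mathfrak a)$: alternating $p$-linear maps with Chevalley–Eilenberg differential $d$; $C^p(\mathfrak l)=C^p(\mathfrak l,\mathbb R)$. $\langle\alpha\wedge\beta\rangle\in C^{p+q}(\mathfrak l)$ is the wedge product followed by contraction with $\langle\cdot,\cdot\rangle_{\mathfrak a}$. $\mathcal Z^2_Q(\mathfrak l,\mathfrak a)=\{(\alpha,\gamma)\in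 C^2(\mathfrak l,\mathfrak a)\oplus C^3(\mathfrak l): d\alpha=0, d\gamma=\frac12\langle\alpha\wedge\alpha\rangle\}$; the group $C^1(\mathfrak l,\mathfrak a)\oplus C^2(\mathfrak l)$ with $(\tau_1,\sigma_1)*(\tau_2,\sigma_2)=(\tau_1+\tau_2,\sigma_1+\sigma_2+\frac12\langle\tau_1\wedge\tau_2\rangle)$ acts by $(\alpha,\gamma)(\tau,\sigma)=(\alpha+d\tau,\gamma+d\sigma+\langle(\alpha+\frac12d\tau)\wedge\tau\rangle)$; the orbit set is $\mathcal H^2_Q(\mathfrak l,\mathfrak a)$. Admissibility (for nilpotent $\mathfrak l$ and semisimple orthogonal $(\rho,\mathfrak a)$): let $\mathfrak l^{m+2}=0$, $\mathfrak l_{(0)}=\mathfrak z(\mathfrak l)\cap\ker\rho$, $\mathfrak l_{(k)}=\mathfrak z(\mathfrak l)\cap\mathfrak l^{k+1}$ for $k\ge1$; represent the class by $(\alpha,\gamma)$ with $\alpha(\mathfrak l,\mathfrak l)\subset\mathfrak a^{\mathfrak l}$. It is admissible iff for $0\le k\le m$: $(A_k)$ if $L_0\in\mathfrak l_{(k)}$ and there are $A_0\in\mathfrak a$, $Z_0\in(\mathfrak l^{k+1})^*$ with $\alpha(L,L_0)=0$ and $\gamma(L,L_0,\cdot)=-\langle A_0,\alpha(L,\cdot)\rangle_{\mathfrak a}+\langle Z_0,[L,\cdot]\rangle$ on $\mathfrak l^{k+1}$ for all $L\in\mathfrak l$, then $L_0=0$; $(B_k)$ $\alpha(\ker(\mathfrak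 l\otimes\mathfrak l^{k+1}\xrightarrow{[\cdot,\cdot]}\mathfrak l))\subset\mathfrak a$ is nondegenerate. $\mathfrak l$ is admissible if for some semisimple orthogonal module $\mathfrak a$ an admissible class in $\mathcal H^2_Q(\mathfrak l,\mathfrak a)$ exists. *)

From Stdlib Require Import Rdefinitions.
From HB Require Import structures.
From mathcomp Require Import all_boot all_order all_algebra.
From mathcomp Require Import Rstruct.

Set Implicit Arguments.
Unset Strict Implicit.
Unset Printing Implicit Defensive.

Import Order.TTheory GRing.Theory Num.Theory.
Local Open Scope ring_scope.

Definition vec (n : nat) := 'rV[R]_n.

(* A bracket list entry (a, b, k, s) means: [e_a, e_b] contains s * e_k.
   Brackets of basis vectors that are not listed vanish; the antisymmetric
   counterparts [e_b, e_a] are implied. *)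
Definition sconst (L : seq (nat * nat * nat * R)) (i j k : nat) : R :=
  \sum_(t <- L)
     ((((t.1.1.1 == i) && (t.1.1.2 == j) && (t.1.2 == k)) : bool)%:R * t.2
      - (((t.1.1.1 == j) && (t.1.1.2 == i) && (t.1.2 == k)) : bool)%:R * t.2).

Definition br (n : nat) (L : seq (nat * nat * nat * R)) (x y : vec n) : vec n :=
  \row_(k < n) \sum_(i < n) \sum_(j < n) x 0 i * y 0 j * sconst L i j k.

(* Lower central series, as row spaces: lcs L k is l^(k+1)
   (so lcs L 0 = l = l^1, lcs L (k+1) = [l, l^(k+1)]). *)
Fixpoint lcs (n : nat) (L : seq (nat * nat * nat * R)) (k : nat) : 'M[R]_n :=
  match k with
  | 0 => 1%:M
  | k'.+1 =>
      (\sum_(i < n) \sum_(j < n)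
         <<br L (delta_mx 0 i) (row j (lcs n L k'))>>)%MS
  end.
Arguments lcs {n} L k.

Definition in_centre n L (X : vec n) : Prop := forall Y : vec n, br L X Y = 0.

Definition form (p : nat) (S : 'M[R]_p) (A B : 'rV[R]_p) : R := (A *m S *m B^T) 0 0.

Definition act (n p : nat) (rho : vec n -> 'M[R]_p) (X : vec n) (A : 'rV[R]_p)
  : 'rV[R]_p := A *m rho X.

Definition orthogonal_module (n : nat) (L : seq (nat * nat * nat * R)) (p : nat)
    (S : 'M[R]_p) (rho : vec n -> 'M[R]_p) : Prop :=
  [/\
      S^T = S, S \in unitmx,
      (forall (c : R) (X Y : vec n), rho (c *: X + Y) = c *: rho X + rho Y),
      (forall (X Y : vec n) (A : 'rV[R]_p),
          act rho (br L X Y) A = act rho X (act rho Y A) - act rho Y (act rho X A))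
    &
      (forall (X : vec n) (A B : 'rV[R]_p),
          form S (act rho X A) B + form S A (act rho X B) = 0)].

Definition invariant_subspace (n p : nat) (rho : vec n -> 'M[R]_p) (U : 'M[R]_p) :=
  forall X : vec n, (U *m rho X <= U)%MS.

Definition semisimple_module (n p : nat) (rho : vec n -> 'M[R]_p) : Prop :=
  forall U : 'M[R]_p, invariant_subspace rho U ->
    exists V : 'M[R]_p, [/\ invariant_subspace rho V,
                            (U :&: V == (0 : 'M[R]_p))%MS & (U + V == 1%:M)%MS].

Definition invariant_vector (n p : nat) (rho : vec n -> 'M[R]_p) (A : 'rV[R]_p) :=
  forall X : vec n, act rho X A = 0.

Definition cochain2 (n p : nat) (alpha : vec n -> vec n -> 'rV[R]_p) : Prop :=
  [/\ (forall (c : R) X X' Y, alpha (c *: X + X') Y = c *: alpha X Y + alpha X' Y),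
      (forall (c : R) X Y Y', alpha X (c *: Y + Y') = c *: alpha X Y + alpha X Y')
    & (forall X, alpha X X = 0)].

Definition cochain3 (n : nat) (gamma : vec n -> vec n -> vec n -> R) : Prop :=
  [/\ (forall (c : R) X X' Y Z,
          gamma (c *: X + X') Y Z = c * gamma X Y Z + gamma X' Y Z),
      (forall (c : R) X Y Y' Z,
          gamma X (c *: Y + Y') Z = c * gamma X Y Z + gamma X Y' Z),
      (forall (c : R) X Y Z Z',
          gamma X Y (c *: Z + Z') = c * gamma X Y Z + gamma X Y Z')
    & (forall X Y, [/\ gamma X X Y = 0, gamma X Y X = 0 & gamma Y X X = 0])].

Definition d2 (n : nat) (L : seq (nat * nat * nat * R)) (p : nat)
    (rho : vec n -> 'M[R]_p) (alpha : vec n -> vec n -> 'rV[R]_p)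
    (X0 X1 X2 : vec n) : 'rV[R]_p :=
  act rho X0 (alpha X1 X2) - act rho X1 (alpha X0 X2) + act rho X2 (alpha X0 X1)
  - alpha (br L X0 X1) X2 + alpha (br L X0 X2) X1 - alpha (br L X1 X2) X0.

Definition d3 (n : nat) (L : seq (nat * nat * nat * R))
    (gamma : vec n -> vec n -> vec n -> R) (X0 X1 X2 X3 : vec n) : R :=
  - gamma (br L X0 X1) X2 X3 + gamma (br L X0 X2) X1 X3 - gamma (br L X0 X3) X1 X2
  - gamma (br L X1 X2) X0 X3 + gamma (br L X1 X3) X0 X2 - gamma (br L X2 X3) X0 X1.

(* <alpha /\ beta> in C^4(l) for alpha, beta in C^2(l, a)
   (wedge product with the usual shuffle normalisation, then contraction) *)
Definition wedge22 (n p : nat) (S : 'M[R]_p) (alpha beta : vec n -> vec n -> 'rV[R]_p)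
    (X1 X2 X3 X4 : vec n) : R :=
    form S (alpha X1 X2) (beta X3 X4) - form S (alpha X1 X3) (beta X2 X4)
  + form S (alpha X1 X4) (beta X2 X3) + form S (alpha X2 X3) (beta X1 X4)
  - form S (alpha X2 X4) (beta X1 X3) + form S (alpha X3 X4) (beta X1 X2).

Definition quadratic_cocycle (n : nat) (L : seq (nat * nat * nat * R)) (p : nat)
    (S : 'M[R]_p) (rho : vec n -> 'M[R]_p)
    (alpha : vec n -> vec n -> 'rV[R]_p) (gamma : vec n -> vec n -> vec n -> R) : Prop :=
  [/\ cochain2 alpha, cochain3 gamma,
      (forall X0 X1 X2, d2 L rho alpha X0 X1 X2 = 0)
    & (forall X0 X1 X2 X3,
         d3 L gamma X0 X1 X2 X3 = 2^-1 * wedge22 S alpha alpha X0 X1 X2 X3)].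

Definition l_sub (n : nat) (L : seq (nat * nat * nat * R)) (p : nat)
    (rho : vec n -> 'M[R]_p) (k : nat) (X : vec n) : Prop :=
  in_centre L X /\ (if k == 0%N then rho X = 0 else (X <= lcs L k)%MS).

Definition cond_A (n : nat) (L : seq (nat * nat * nat * R)) (p : nat)
    (S : 'M[R]_p) (rho : vec n -> 'M[R]_p)
    (alpha : vec n -> vec n -> 'rV[R]_p) (gamma : vec n -> vec n -> vec n -> R)
    (k : nat) : Prop :=
  forall L0 : vec n, l_sub L rho k L0 ->
  forall (A0 : 'rV[R]_p) (Z0 : vec n -> R),
    (forall (c : R) (Y Y' : vec n), (Y <= lcs L k)%MS -> (Y' <= lcs L k)%MS ->
        Z0 (c *: Y + Y') = c * Z0 Y + Z0 Y') ->
    (forall Lx : vec n, alpha Lx L0 = 0) ->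
    (forall Lx Y : vec n, (Y <= lcs L k)%MS ->
        gamma Lx L0 Y = - form S A0 (alpha Lx Y) + Z0 (br L Lx Y)) ->
    L0 = 0.

(* Tensors in l (x) l are represented by n x n matrices T (T = sum_ij T_ij e_i (x) e_j);
   l (x) l^(k+1) is the set of T all of whose rows lie in l^(k+1). *)
Definition tensor_bracket (n : nat) (L : seq (nat * nat * nat * R)) (T : 'M[R]_n) : vec n :=
  \sum_(i < n) \sum_(j < n) T i j *: br L (delta_mx 0 i) (delta_mx 0 j).

Definition tensor_alpha (n p : nat) (alpha : vec n -> vec n -> 'rV[R]_p) (T : 'M[R]_n)
  : 'rV[R]_p :=
  \sum_(i < n) \sum_(j < n) T i j *: alpha (delta_mx 0 i) (delta_mx 0 j).

Definition image_B (n : nat) (L : seq (nat * nat * nat * R)) (p : nat)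
    (alpha : vec n -> vec n -> 'rV[R]_p) (k : nat) (A : 'rV[R]_p) : Prop :=
  exists T : 'M[R]_n,
    [/\ (T <= lcs L k)%MS, tensor_bracket L T = 0 & A = tensor_alpha alpha T].

Definition cond_B (n : nat) (L : seq (nat * nat * nat * R)) (p : nat)
    (S : 'M[R]_p) (alpha : vec n -> vec n -> 'rV[R]_p) (k : nat) : Prop :=
  forall A : 'rV[R]_p, image_B L alpha k A ->
    (forall B : 'rV[R]_p, image_B L alpha k B -> form S A B = 0) -> A = 0.

(* The class of (alpha, gamma) (a representative with alpha(l,l) in a^l)
   is admissible; l^(m+2) = 0 is lcs L (m+1) = 0. *)
Definition admissible_cocycle (n : nat) (L : seq (nat * nat * nat * R)) (p : nat)
    (S : 'M[R]_p) (rho : vec n -> 'M[R]_p)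
    (alpha : vec n -> vec n -> 'rV[R]_p) (gamma : vec n -> vec n -> vec n -> R) : Prop :=
  exists m : nat, lcs (n := n) L m.+1 = 0 /\
    forall k : nat, (k <= m)%N -> cond_A L S rho alpha gamma k /\ cond_B L S alpha k.

Definition admissible (n : nat) (L : seq (nat * nat * nat * R)) : Prop :=
  exists (p : nat) (S : 'M[R]_p) (rho : vec n -> 'M[R]_p)
         (alpha : vec n -> vec n -> 'rV[R]_p) (gamma : vec n -> vec n -> vec n -> R),
    [/\ orthogonal_module L S rho, semisimple_module rho,
        quadratic_cocycle L S rho alpha gamma,
        (forall X Y : vec n, invariant_vector rho (alpha X Y))
      & admissible_cocycle L S rho alpha gamma].

(* h(1): X1=e0, X2=e1, Y=e2 ; [X1,X2]=Y *)
Definition h1_dim : nat := 3.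
Definition h1_br : seq (nat * nat * nat * R) := [:: (0%N, 1%N, 2%N, 1)].

(* g_{4,1}: X1=e0, X2=e1, Z=e2, Y=e3 ; [X1,Z]=Y, [X1,X2]=Z *)
Definition g41_dim : nat := 4.
Definition g41_br : seq (nat * nat * nat * R) := [:: (0%N, 2%N, 3%N, 1); (0%N, 1%N, 2%N, 1)].

(* g_{5,2}: X1=e0, X2=e1, X3=e2, Y=e3, Z=e4 ; [X1,X2]=Y, [X1,X3]=Z *)
Definition g52_dim : nat := 5.
Definition g52_br : seq (nat * nat * nat * R) := [:: (0%N, 1%N, 3%N, 1); (0%N, 2%N, 4%N, 1)].

(* g_{6,4}: X1..X4=e0..e3, Y=e4, Z=e5 ; [X1,X2]=Y, [X1,X3]=Z, [X3,X4]=Y *)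
Definition g64_dim : nat := 6.
Definition g64_br : seq (nat * nat * nat * R) :=
  [:: (0%N, 1%N, 4%N, 1); (0%N, 2%N, 5%N, 1); (2%N, 3%N, 4%N, 1)].

(* g_{6,5}: X1..X4=e0..e3, Y=e4, Z=e5 ;
   [X1,X2]=Y, [X1,X3]=Z, [X2,X4]=Z, [X3,X4]=-Y *)
Definition g65_dim : nat := 6.
Definition g65_br : seq (nat * nat * nat * R) :=
  [:: (0%N, 1%N, 4%N, 1); (0%N, 2%N, 5%N, 1); (1%N, 3%N, 5%N, 1); (2%N, 3%N, 4%N, -1)].

(* All five algebras carry an admissible class for a trivial module [a = R^p]
   and [gamma = 0]. Such a pair [(alpha, 0)] is a quadratic cocycle as soon as
   [alpha] is closed with [<alpha /\ alpha> = 0], and condition (A_k) only asks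
   that no nonzero central element lie in the radical of [alpha]. Writing
   [x1, ..., x4, y, z] for the basis dual to [X1, ..., X4, Y, Z], we take
     h(1)     [(x1 /\ y, x2 /\ y)]                  identity form on R^2
     g_{4,1}  [x1 /\ y]                             identity form on R
     g_{5,2}  [(x1 /\ y, x1 /\ z)]                  identity form on R^2
     g_{6,4}  [(x1 /\ y - x4 /\ z, x1 /\ z)]         hyperbolic plane
     g_{6,5}  [(x1 /\ y + x4 /\ z, x1 /\ z - x4 /\ y)] hyperbolic plane.
   For a definite form (B_k) is automatic. On the hyperbolic plane
   [<alpha /\ alpha> = 2 alpha_1 /\ alpha_2], which vanishes, and (B_k) holds
   because [alpha] maps [X1 (x) Y] and [X1 (x) Z], both in the kernel of the
   bracket, onto a basis of [a]. The terms of the lower central series are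
   spans of trailing basis vectors, so everything is checked in coordinates. *)

From Stdlib Require Import Rdefinitions.
From HB Require Import structures.
From mathcomp Require Import all_boot all_order all_algebra.
From mathcomp Require Import Rstruct.
From mathcomp Require Import ring lra.

Set Implicit Arguments.
Unset Strict Implicit.
Unset Printing Implicit Defensive.
Import Order.TTheory GRing.Theory Num.Theory.
Local Open Scope ring_scope.

Definition coord n (x : 'rV[R]_n.+1) (i : nat) : R := x 0 (inord i).
Arguments coord : simpl never.

Section Coordinates.
Variable n : nat.
Implicit Types (x y : 'rV[R]_n.+1) (a : R).

Lemma coord0 i : coord (0 : 'rV[R]_n.+1) i = 0.
Proof. by rewrite /coord mxE. Qed.

Lemma coordD x y i : coord (x + y) i = coord x i + coord y i.
Proof. by rewrite /coord mxE. Qed.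

Lemma coordN x i : coord (- x) i = - coord x i.
Proof. by rewrite /coord mxE. Qed.

Lemma coordB x y i : coord (x - y) i = coord x i - coord y i.
Proof. by rewrite /coord !mxE. Qed.

Lemma coordZ a x i : coord (a *: x) i = a * coord x i.
Proof. by rewrite /coord mxE. Qed.

Lemma coord_delta i j : (i < n.+1)%N -> (j < n.+1)%N ->
  coord (delta_mx 0 (inord j) : 'rV[R]_n.+1) i = (i == j)%:R.
Proof. by move=> hi hj; rewrite /coord mxE /= -(inj_eq val_inj) /= !inordK. Qed.

Lemma row_coordP x y : (forall i, (i < n.+1)%N -> coord x i = coord y i) -> x = y.
Proof. by move=> h; apply/rowP => i; have := h i (ltn_ord i); rewrite /coord inord_val. Qed.

End Coordinates.

Definition skew_bilin n p (P : seq (nat * nat * nat * R)) (X Y : 'rV[R]_n.+1)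
    : 'rV[R]_p :=
  \row_(r < p) \sum_(t <- P)
     ((t.1.2 == r)%:R * t.2 * (coord X t.1.1.1 * coord Y t.1.1.2
                               - coord X t.1.1.2 * coord Y t.1.1.1)).

Lemma coord_skew_bilin n p P (X Y : 'rV[R]_n.+1) r : (r < p.+1)%N ->
  coord (skew_bilin p.+1 P X Y) r = \sum_(t <- P)
     ((t.1.2 == r)%:R * t.2 * (coord X t.1.1.1 * coord Y t.1.1.2
                               - coord X t.1.1.2 * coord Y t.1.1.1)).
Proof. by move=> hr; rewrite /coord mxE inordK. Qed.

Lemma skew_bilin_cochain2 n p P : cochain2 (@skew_bilin n p P).
Proof.
split.
- move=> a X X' Y; apply/rowP => r; rewrite !mxE mulr_sumr -big_split /=.
  by apply: eq_bigr => t _; rewrite !coordD !coordZ; ring.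
- move=> a X Y Y'; apply/rowP => r; rewrite !mxE mulr_sumr -big_split /=.
  by apply: eq_bigr => t _; rewrite !coordD !coordZ; ring.
- by move=> X; apply/rowP => r; rewrite !mxE; apply: big1 => t _; ring.
Qed.

Lemma sum_coord_pair n (x y : 'rV[R]_n.+1) a b : (a < n.+1)%N -> (b < n.+1)%N ->
  \sum_(i < n.+1) \sum_(j < n.+1) x 0 i * y 0 j * ((a == i) && (b == j))%:R
  = coord x a * coord y b.
Proof.
move=> ha hb; have nat_inord m (k : 'I_n.+1) :
    (m < n.+1)%N -> k != inord m -> (m == k) = false.
  by move=> hm; apply: contraNF => /eqP ->; rewrite inord_val.
rewrite (bigD1 (inord a)) //= [X in _ + X]big1 ?addr0 => [|i hi]; last first.
  by rewrite nat_inord //=; apply: big1 => j _; rewrite mulr0.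
rewrite (bigD1 (inord b)) //= [X in _ + X]big1 ?addr0 => [|j hj]; last first.
  by rewrite (nat_inord b) // andbF mulr0.
by rewrite !inordK // !eqxx mulr1.
Qed.

Lemma br_skew_bilin n L (X Y : 'rV[R]_n.+1) :
  all (fun t => (t.1.1.1 < n.+1)%N && (t.1.1.2 < n.+1)%N) L ->
  br L X Y = skew_bilin n.+1 L X Y.
Proof.
move=> hL; apply/rowP => k; rewrite !mxE.
elim: L hL => [_|[[[a b] r] s] L IH /= /andP[/andP[ha hb] hL]].
  by rewrite big_nil; apply: big1 => i _; apply: big1 => j _; rewrite /sconst big_nil mulr0.
rewrite big_cons -(IH hL) -(sum_coord_pair X Y ha hb) -(sum_coord_pair X Y hb ha).
rewrite mulrBr !mulr_sumr -sumrB -big_split; apply: eq_bigr => i _ /=.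
rewrite !mulr_sumr -sumrB -big_split; apply: eq_bigr => j _ /=.
rewrite /sconst big_cons /=.
by case: (a == i); case: (b == j); case: (a == j); case: (b == i); case: (r == k);
  rewrite /= ?mulr0 ?mul0r ?mulr1 ?mul1r; ring.
Qed.

Lemma form_coord p (S : 'M[R]_p.+1) (A B : 'rV[R]_p.+1) :
  form S A B = \sum_(i <- iota 0 p.+1) \sum_(j <- iota 0 p.+1)
                 coord A i * S (inord i) (inord j) * coord B j.
Proof.
have sum_iota (F : 'I_p.+1 -> R) :
    \sum_(i < p.+1) F i = \sum_(i <- iota 0 p.+1) F (inord i).
  rewrite -[iota _ _]/(index_iota 0 p.+1) big_mkord.
  by apply: eq_bigr => i _; rewrite inord_val.
rewrite /form mxE sum_iota exchange_big; apply: eq_bigr => j _.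
by rewrite mxE sum_iota mulr_suml; apply: eq_bigr => i _; rewrite mxE.
Qed.

Definition trivial_rep n p : vec n -> 'M[R]_p := fun _ => 0.

Section TrivialModule.
Variables (n p : nat) (L : seq (nat * nat * nat * R)).

Lemma trivial_rep_orthogonal (S : 'M[R]_p) :
  S^T = S -> S \in unitmx -> orthogonal_module L S (@trivial_rep n p).
Proof.
move=> S_sym S_unit; split => //.
- by move=> a X Y; rewrite scaler0 addr0.
- by move=> X Y A; rewrite /act !mulmx0 subrr.
- by move=> X A B; rewrite /form /act !mulmx0 trmx0 !mul0mx mulmx0 mxE addr0.
Qed.

Lemma trivial_rep_semisimple : semisimple_module (@trivial_rep n p).
Proof.
move=> U _; exists (U^C)%MS; split.
- by move=> X; rewrite mulmx0 sub0mx.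
- by rewrite capmx_compl submx_refl.
- by rewrite submx1 sub1mx addsmx_compl_full.
Qed.

Lemma trivial_rep_invariant (A : 'rV[R]_p) : invariant_vector (@trivial_rep n p) A.
Proof. by move=> X; rewrite /act mulmx0. Qed.

End TrivialModule.

Lemma cochain3_zero n : cochain3 (fun _ _ _ : vec n => 0).
Proof. by split => *; rewrite ?mulr0 ?addr0. Qed.

Section Conditions.
Variables (n p : nat) (L : seq (nat * nat * nat * R)).
Implicit Types (S : 'M[R]_p) (alpha : vec n -> vec n -> 'rV[R]_p).

Lemma cond_A_of_radical S rho alpha gamma k :
  (forall L0, in_centre L L0 -> (forall X, alpha X L0 = 0) -> L0 = 0) ->
  cond_A L S rho alpha gamma k.
Proof. by move=> rad L0 [L0_centre _] A0 Z0 _ alphaL0 _; apply: rad. Qed.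

(* The identity form is positive definite, so every subspace is nondegenerate. *)
Lemma cond_B_form1 alpha k : cond_B L 1%:M alpha k.
Proof.
move=> A A_im /(_ A A_im); rewrite /form mulmx1 mxE => isotropic.
have sq_sum0 : \sum_j A 0 j ^+ 2 = 0.
  by rewrite -[RHS]isotropic; apply: eq_bigr => j _; rewrite mxE expr2.
have sq0 := psumr_eq0P (fun j _ => sqr_ge0 (A 0 j)) sq_sum0.
by apply/rowP => i; apply/eqP; rewrite mxE -sqrf_eq0 sq0.
Qed.

Lemma cond_B_of_basis S alpha k : S \in unitmx ->
  (forall i : 'I_p, image_B L alpha k (delta_mx 0 i)) -> cond_B L S alpha k.
Proof.
move=> S_unit basis A _ A_orth.
have S_free : row_free S by rewrite row_free_unit.
apply: (row_free_inj S_free) => /=; rewrite mul0mx; apply/rowP => i.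
rewrite [RHS]mxE -(A_orth _ (basis i)) /form [RHS]mxE (bigD1 i) //= big1 => [|j ji].
  by rewrite !mxE !eqxx mulr1 addr0.
by rewrite !mxE (negbTE ji) andbF mulr0.
Qed.

Lemma image_B_delta alpha k (a b : 'I_n) :
  ((delta_mx 0 b : vec n) <= lcs L k)%MS -> br L (delta_mx 0 a) (delta_mx 0 b) = 0 ->
  image_B L alpha k (alpha (delta_mx 0 a) (delta_mx 0 b)).
Proof.
have sum_delta (V : lmodType R) (f : vec n -> vec n -> V) :
    \sum_(i < n) \sum_(j < n) delta_mx a b i j *: f (delta_mx 0 i) (delta_mx 0 j)
    = f (delta_mx 0 a) (delta_mx 0 b).
  rewrite (bigD1 a) //= (bigD1 b) //= !mxE !eqxx scale1r.
  rewrite big1 ?addr0 => [|j /negbTE jb]; last by rewrite mxE jb andbF scale0r.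
  rewrite big1 ?addr0 // => i /negbTE ia; apply: big1 => j _.
  by rewrite mxE ia scale0r.
move=> b_lcs ab0; exists (delta_mx a b); split.
- by rewrite -(mul_delta_mx (0 : 'I_1)); apply: submx_trans (submxMl _ _) b_lcs.
- by rewrite /tensor_bracket sum_delta.
- by rewrite /tensor_alpha sum_delta.
Qed.

End Conditions.

Definition tail_proj n d : 'M[R]_n := diag_mx (\row_(k < n) (d <= k)%:R).

Lemma tail_proj0 n : tail_proj n 0 = 1%:M.
Proof. by apply/matrixP => i j; rewrite !mxE. Qed.

Lemma tail_proj_out n d : (n <= d)%N -> tail_proj n d = 0.
Proof.
move=> nd; apply/matrixP => i j; rewrite !mxE leqNgt (leq_trans (ltn_ord i) nd).
by rewrite mul0rn.
Qed.

Lemma coord_tail_proj n d (v : 'rV[R]_n.+1) i : (i < n.+1)%N ->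
  coord (v *m tail_proj n.+1 d) i = coord v i * (d <= i)%:R.
Proof. by move=> ni; rewrite /coord mul_mx_diag !mxE inordK. Qed.

Section LowerCentralSeries.
Variables (n : nat) (L : seq (nat * nat * nat * R)).

Lemma lcs_tail_step k d1 d2 : (lcs L k <= tail_proj n d1)%MS ->
  (forall x v, br L x (v *m tail_proj n d1) *m tail_proj n d2
               = br L x (v *m tail_proj n d1)) ->
  (lcs L k.+1 <= tail_proj n d2)%MS.
Proof.
move=> lcs_d1 br_d2 /=; apply/sumsmx_subP => i _; apply/sumsmx_subP => j _.
have /submxP[w ->] := submx_trans (row_sub j _) lcs_d1.
by rewrite genmxE -br_d2 submxMl.
Qed.

Lemma lcs_tail0 : (lcs L 0 <= tail_proj n 0)%MS.
Proof. by rewrite tail_proj0 submx_refl. Qed.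

Lemma lcs_tail_out k d : (n <= d)%N -> (lcs L k <= tail_proj n d)%MS ->
  lcs (n := n) L k = 0.
Proof. by move=> nd; rewrite tail_proj_out // submx0 => /eqP. Qed.

Lemma br_sub_lcs k (a b : 'I_n) : (k <= 1)%N ->
  (br L (delta_mx 0 a) (delta_mx 0 b) <= lcs L k)%MS.
Proof.
case: k => [_|[_|//]]; first exact: submx1.
by apply: (sumsmx_sup a) => //; apply: (sumsmx_sup b) => //; rewrite genmxE row1.
Qed.

Lemma cond_B_of_bracket_basis p (S : 'M[R]_p) (alpha : vec n -> vec n -> 'rV[R]_p) k :
  S \in unitmx -> (k <= 1)%N ->
  (forall i : 'I_p, exists a b c d : 'I_n,
     [/\ br L (delta_mx 0 c) (delta_mx 0 d) = delta_mx 0 b,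
         br L (delta_mx 0 a) (delta_mx 0 b) = 0
       & alpha (delta_mx 0 a) (delta_mx 0 b) = delta_mx 0 i]) ->
  cond_B L S alpha k.
Proof.
move=> S_unit k1 basis; apply: cond_B_of_basis S_unit _ => i.
have [a [b [c [d [cd_b ab0 <-]]]]] := basis i.
by apply: image_B_delta ab0; rewrite -cd_b br_sub_lcs.
Qed.

End LowerCentralSeries.

Definition hyperbolic_form : 'M[R]_2 := \matrix_(i, j) (i + j == 1)%N%:R.

Lemma hyperbolic_form_inord i j : (i < 2)%N -> (j < 2)%N ->
  hyperbolic_form (inord i) (inord j) = (i + j == 1)%N%:R.
Proof. by move=> i2 j2; rewrite mxE !inordK. Qed.

Lemma hyperbolic_form_sym : hyperbolic_form^T = hyperbolic_form.
Proof. by apply/matrixP => i j; rewrite !mxE addnC. Qed.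

Lemma hyperbolic_form_unit : hyperbolic_form \in unitmx.
Proof.
suff /mulmx1_unit[] : hyperbolic_form *m hyperbolic_form = 1%:M by [].
apply/matrixP => i j; rewrite !mxE !big_ord_recr big_ord0 /= !mxE.
by case: i => [[|[|i]] ?] //; case: j => [[|[|j]] ?]; rewrite //= ?mulr0 ?mulr1 ?add0r ?addr0.
Qed.

Lemma mx1_inord p i j : (i < p.+1)%N -> (j < p.+1)%N ->
  (1%:M : 'M[R]_p.+1) (inord i) (inord j) = (i == j)%:R.
Proof. by move=> ip jp; rewrite mxE -(inj_eq val_inj) /= !inordK. Qed.

Definition trivial_cocycle n p L (alpha : vec n -> vec n -> 'rV[R]_p) :=
  forall X0 X1 X2,
    alpha (br L X0 X1) X2 - alpha (br L X0 X2) X1 + alpha (br L X1 X2) X0 = 0.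

Lemma admissible_trivial_rep n L p (S : 'M[R]_p) (alpha : vec n -> vec n -> 'rV[R]_p) m :
  S^T = S -> S \in unitmx -> cochain2 alpha -> trivial_cocycle L alpha ->
  (forall X0 X1 X2 X3, wedge22 S alpha alpha X0 X1 X2 X3 = 0) ->
  lcs (n := n) L m.+1 = 0 ->
  (forall L0, in_centre L L0 -> (forall X, alpha X L0 = 0) -> L0 = 0) ->
  (forall k, (k <= m)%N -> cond_B L S alpha k) ->
  admissible n L.
Proof.
move=> S_sym S_unit alpha2 alpha_closed wedge0 nilp radical condB.
exists p, S, (@trivial_rep n p), alpha, (fun _ _ _ => 0); split.
- exact: trivial_rep_orthogonal.
- exact: trivial_rep_semisimple.
- split=> [||X0 X1 X2|X0 X1 X2 X3]; [exact: alpha2 | exact: cochain3_zero | |].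
    rewrite /d2 /act !mulmx0 !(subr0, addr0, sub0r); apply/eqP.
    by rewrite -oppr_eq0 !opprD !opprK alpha_closed.
  by rewrite wedge0 mulr0 /d3 ?RminusE ?RplusE ?RoppE !(oppr0, subr0, addr0).
- by move=> X Y; apply: trivial_rep_invariant.
- by exists m; split=> // k km; split; [apply: cond_A_of_radical | apply: condB].
Qed.

Ltac expand_coords :=
  do 2 (rewrite ?(coordD, coordB, coordN, coordZ, coord0) ?coord_tail_proj //
          ?coord_skew_bilin // ?big_cons ?big_nil /=);
  rewrite ?coord_delta //=.

Ltac expand_coords_in H :=
  do 2 (rewrite ?(coordD, coordB, coordN, coordZ, coord0) ?coord_tail_proj //
          ?coord_skew_bilin // ?big_cons ?big_nil /= in H);
  rewrite ?coord_delta //= in H.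

(* Only for row vectors of dimension at most 7. *)
Ltac by_coords tac :=
  let i := fresh "i" in
  apply: row_coordP => i; do 7? (case: i => [|i]; first by move=> ?; tac); by [].

Ltac tail_step := move=> ? ?; rewrite br_skew_bilin //; by_coords ltac:(expand_coords; ring).

Ltac have_coord H eq i :=
  have H := congr1 (fun w => coord w i) eq;
  rewrite /= ?br_skew_bilin // in H; expand_coords_in H.

Definition h1_alpha : vec h1_dim -> vec h1_dim -> 'rV[R]_2 :=
  skew_bilin 2 [:: (0%N, 2%N, 0%N, 1); (1%N, 2%N, 1%N, 1)].

Lemma h1_alpha_cocycle : trivial_cocycle h1_br h1_alpha.
Proof.
move=> X0 X1 X2; rewrite !br_skew_bilin // /h1_alpha.
by_coords ltac:(expand_coords; ring).
Qed.

Lemma h1_alpha_wedge X0 X1 X2 X3 : wedge22 1%:M h1_alpha h1_alpha X0 X1 X2 X3 = 0.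
Proof.
rewrite /wedge22 ?RplusE ?RminusE !form_coord /= !big_cons !big_nil !mx1_inord //= /h1_alpha.
by expand_coords; ring.
Qed.

Lemma h1_radical L0 : in_centre h1_br L0 -> (forall X, h1_alpha X L0 = 0) -> L0 = 0.
Proof.
rewrite /h1_alpha => L0_centre L0_rad.
have_coord e1 (L0_centre (delta_mx 0 (inord 1))) 2%N.
have_coord e2 (L0_centre (delta_mx 0 (inord 0))) 2%N.
have_coord e3 (L0_rad (delta_mx 0 (inord 0))) 0%N.
by_coords ltac:(expand_coords; lra).
Qed.

Lemma h1_nilpotent : lcs (n := h1_dim) h1_br 2 = 0.
Proof.
apply: (@lcs_tail_out _ _ _ 3) => //.
apply: (lcs_tail_step (d1 := 2)); last by tail_step.
apply: (lcs_tail_step (d1 := 0)); last by tail_step.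
exact: lcs_tail0.
Qed.

Lemma h1_admissible : admissible h1_dim h1_br.
Proof.
apply: (admissible_trivial_rep (m := 1) (trmx1 _ _) (unitmx1 _ _) (skew_bilin_cochain2 _ _ _)).
- exact: h1_alpha_cocycle.
- exact: h1_alpha_wedge.
- exact: h1_nilpotent.
- exact: h1_radical.
- by move=> k _; apply: cond_B_form1.
Qed.

Definition g41_alpha : vec g41_dim -> vec g41_dim -> 'rV[R]_1 :=
  skew_bilin 1 [:: (0%N, 3%N, 0%N, 1)].

Lemma g41_alpha_cocycle : trivial_cocycle g41_br g41_alpha.
Proof.
move=> X0 X1 X2; rewrite !br_skew_bilin // /g41_alpha.
by_coords ltac:(expand_coords; ring).
Qed.

Lemma g41_alpha_wedge X0 X1 X2 X3 : wedge22 1%:M g41_alpha g41_alpha X0 X1 X2 X3 = 0.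
Proof.
rewrite /wedge22 ?RplusE ?RminusE !form_coord /= !big_cons !big_nil !mx1_inord //= /g41_alpha.
by expand_coords; ring.
Qed.

Lemma g41_radical L0 : in_centre g41_br L0 -> (forall X, g41_alpha X L0 = 0) -> L0 = 0.
Proof.
rewrite /g41_alpha => L0_centre L0_rad.
have_coord e1 (L0_centre (delta_mx 0 (inord 0))) 3%N.
have_coord e2 (L0_centre (delta_mx 0 (inord 0))) 2%N.
have_coord e3 (L0_centre (delta_mx 0 (inord 1))) 2%N.
have_coord e4 (L0_rad (delta_mx 0 (inord 0))) 0%N.
by_coords ltac:(expand_coords; lra).
Qed.

Lemma g41_nilpotent : lcs (n := g41_dim) g41_br 3 = 0.
Proof.
apply: (@lcs_tail_out _ _ _ 4) => //.
apply: (lcs_tail_step (d1 := 3)); last by tail_step.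
apply: (lcs_tail_step (d1 := 2)); last by tail_step.
apply: (lcs_tail_step (d1 := 0)); last by tail_step.
exact: lcs_tail0.
Qed.

Lemma g41_admissible : admissible g41_dim g41_br.
Proof.
apply: (admissible_trivial_rep (m := 2) (trmx1 _ _) (unitmx1 _ _) (skew_bilin_cochain2 _ _ _)).
- exact: g41_alpha_cocycle.
- exact: g41_alpha_wedge.
- exact: g41_nilpotent.
- exact: g41_radical.
- by move=> k _; apply: cond_B_form1.
Qed.

Definition g52_alpha : vec g52_dim -> vec g52_dim -> 'rV[R]_2 :=
  skew_bilin 2 [:: (0%N, 3%N, 0%N, 1); (0%N, 4%N, 1%N, 1)].

Lemma g52_alpha_cocycle : trivial_cocycle g52_br g52_alpha.
Proof.
move=> X0 X1 X2; rewrite !br_skew_bilin // /g52_alpha.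
by_coords ltac:(expand_coords; ring).
Qed.

Lemma g52_alpha_wedge X0 X1 X2 X3 : wedge22 1%:M g52_alpha g52_alpha X0 X1 X2 X3 = 0.
Proof.
rewrite /wedge22 ?RplusE ?RminusE !form_coord /= !big_cons !big_nil !mx1_inord //= /g52_alpha.
by expand_coords; ring.
Qed.

Lemma g52_radical L0 : in_centre g52_br L0 -> (forall X, g52_alpha X L0 = 0) -> L0 = 0.
Proof.
rewrite /g52_alpha => L0_centre L0_rad.
have_coord e1 (L0_centre (delta_mx 0 (inord 0))) 3%N.
have_coord e2 (L0_centre (delta_mx 0 (inord 0))) 4%N.
have_coord e3 (L0_centre (delta_mx 0 (inord 1))) 3%N.
have_coord e4 (L0_rad (delta_mx 0 (inord 0))) 0%N.
have_coord e5 (L0_rad (delta_mx 0 (inord 0))) 1%N.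
by_coords ltac:(expand_coords; lra).
Qed.

Lemma g52_nilpotent : lcs (n := g52_dim) g52_br 2 = 0.
Proof.
apply: (@lcs_tail_out _ _ _ 5) => //.
apply: (lcs_tail_step (d1 := 3)); last by tail_step.
apply: (lcs_tail_step (d1 := 0)); last by tail_step.
exact: lcs_tail0.
Qed.

Lemma g52_admissible : admissible g52_dim g52_br.
Proof.
apply: (admissible_trivial_rep (m := 1) (trmx1 _ _) (unitmx1 _ _) (skew_bilin_cochain2 _ _ _)).
- exact: g52_alpha_cocycle.
- exact: g52_alpha_wedge.
- exact: g52_nilpotent.
- exact: g52_radical.
- by move=> k _; apply: cond_B_form1.
Qed.

Definition g64_alpha : vec g64_dim -> vec g64_dim -> 'rV[R]_2 :=
  skew_bilin 2 [:: (0%N, 4%N, 0%N, 1); (3%N, 5%N, 0%N, -1); (0%N, 5%N, 1%N, 1)].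

Lemma g64_alpha_cocycle : trivial_cocycle g64_br g64_alpha.
Proof.
move=> X0 X1 X2; rewrite !br_skew_bilin // /g64_alpha.
by_coords ltac:(expand_coords; ring).
Qed.

Lemma g64_alpha_wedge X0 X1 X2 X3 :
  wedge22 hyperbolic_form g64_alpha g64_alpha X0 X1 X2 X3 = 0.
Proof.
rewrite /wedge22 ?RplusE ?RminusE !form_coord /= !big_cons !big_nil.
by rewrite !hyperbolic_form_inord //= /g64_alpha; expand_coords; ring.
Qed.

Lemma g64_radical L0 : in_centre g64_br L0 -> (forall X, g64_alpha X L0 = 0) -> L0 = 0.
Proof.
rewrite /g64_alpha => L0_centre L0_rad.
have_coord e1 (L0_centre (delta_mx 0 (inord 0))) 4%N.
have_coord e2 (L0_centre (delta_mx 0 (inord 0))) 5%N.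
have_coord e3 (L0_centre (delta_mx 0 (inord 1))) 4%N.
have_coord e4 (L0_centre (delta_mx 0 (inord 2))) 4%N.
have_coord e5 (L0_rad (delta_mx 0 (inord 0))) 0%N.
have_coord e6 (L0_rad (delta_mx 0 (inord 0))) 1%N.
by_coords ltac:(expand_coords; lra).
Qed.

Lemma g64_nilpotent : lcs (n := g64_dim) g64_br 2 = 0.
Proof.
apply: (@lcs_tail_out _ _ _ 6) => //.
apply: (lcs_tail_step (d1 := 4)); last by tail_step.
apply: (lcs_tail_step (d1 := 0)); last by tail_step.
exact: lcs_tail0.
Qed.

Lemma g64_cond_B k : (k <= 1)%N -> cond_B g64_br hyperbolic_form g64_alpha k.
Proof.
move=> k1; apply: cond_B_of_bracket_basis hyperbolic_form_unit k1 _ => i.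
rewrite -[i]inord_val; case: i => [[|[|//]] _] /=.
- exists (inord 0), (inord 4), (inord 0), (inord 1).
  by split; rewrite ?br_skew_bilin // /g64_alpha; by_coords ltac:(expand_coords; ring).
- exists (inord 0), (inord 5), (inord 0), (inord 2).
  by split; rewrite ?br_skew_bilin // /g64_alpha; by_coords ltac:(expand_coords; ring).
Qed.

Lemma g64_admissible : admissible g64_dim g64_br.
Proof.
apply: (admissible_trivial_rep (m := 1) hyperbolic_form_sym hyperbolic_form_unit
          (skew_bilin_cochain2 _ _ _)).
- exact: g64_alpha_cocycle.
- exact: g64_alpha_wedge.
- exact: g64_nilpotent.
- exact: g64_radical.
- exact: g64_cond_B.
Qed.

Definition g65_alpha : vec g65_dim -> vec g65_dim -> 'rV[R]_2 :=
  skew_bilin 2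
    [:: (0%N, 4%N, 0%N, 1); (3%N, 5%N, 0%N, 1); (3%N, 4%N, 1%N, -1); (0%N, 5%N, 1%N, 1)].

Lemma g65_alpha_cocycle : trivial_cocycle g65_br g65_alpha.
Proof.
move=> X0 X1 X2; rewrite !br_skew_bilin // /g65_alpha.
by_coords ltac:(expand_coords; ring).
Qed.

Lemma g65_alpha_wedge X0 X1 X2 X3 :
  wedge22 hyperbolic_form g65_alpha g65_alpha X0 X1 X2 X3 = 0.
Proof.
rewrite /wedge22 ?RplusE ?RminusE !form_coord /= !big_cons !big_nil.
by rewrite !hyperbolic_form_inord //= /g65_alpha; expand_coords; ring.
Qed.

Lemma g65_radical L0 : in_centre g65_br L0 -> (forall X, g65_alpha X L0 = 0) -> L0 = 0.
Proof.
rewrite /g65_alpha => L0_centre L0_rad.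
have_coord e1 (L0_centre (delta_mx 0 (inord 0))) 4%N.
have_coord e2 (L0_centre (delta_mx 0 (inord 0))) 5%N.
have_coord e3 (L0_centre (delta_mx 0 (inord 1))) 4%N.
have_coord e4 (L0_centre (delta_mx 0 (inord 1))) 5%N.
have_coord e5 (L0_rad (delta_mx 0 (inord 0))) 0%N.
have_coord e6 (L0_rad (delta_mx 0 (inord 0))) 1%N.
by_coords ltac:(expand_coords; lra).
Qed.

Lemma g65_nilpotent : lcs (n := g65_dim) g65_br 2 = 0.
Proof.
apply: (@lcs_tail_out _ _ _ 6) => //.
apply: (lcs_tail_step (d1 := 4)); last by tail_step.
apply: (lcs_tail_step (d1 := 0)); last by tail_step.
exact: lcs_tail0.
Qed.

Lemma g65_cond_B k : (k <= 1)%N -> cond_B g65_br hyperbolic_form g65_alpha k.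
Proof.
move=> k1; apply: cond_B_of_bracket_basis hyperbolic_form_unit k1 _ => i.
rewrite -[i]inord_val; case: i => [[|[|//]] _] /=.
- exists (inord 0), (inord 4), (inord 0), (inord 1).
  by split; rewrite ?br_skew_bilin // /g65_alpha; by_coords ltac:(expand_coords; ring).
- exists (inord 0), (inord 5), (inord 0), (inord 2).
  by split; rewrite ?br_skew_bilin // /g65_alpha; by_coords ltac:(expand_coords; ring).
Qed.

Lemma g65_admissible : admissible g65_dim g65_br.
Proof.
apply: (admissible_trivial_rep (m := 1) hyperbolic_form_sym hyperbolic_form_unit
          (skew_bilin_cochain2 _ _ _)).
- exact: g65_alpha_cocycle.
- exact: g65_alpha_wedge.
- exact: g65_nilpotent.
- exact: g65_radical.
- exact: g65_cond_B.
Qed.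

Theorem proposition1 :
  admissible h1_dim h1_br /\ admissible g41_dim g41_br /\
  admissible g52_dim g52_br /\ admissible g64_dim g64_br /\
  admissible g65_dim g65_br.
Proof.
split; first exact: h1_admissible.
split; first exact: g41_admissible.
split; first exact: g52_admissible.
split; first exact: g64_admissible.
exact: g65_admissible.
Qed.
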